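(* For any graph $G$ with $m\ge1$ edges and any integer $1\le k\le n$, $Q_k^+\ge\left(1-\frac1k\right)Q_{\mathrm{opt}}$.
   Context: $G=(V,E)$ is an undirected simple graph, $V=\{1,\dots,n\}$, $m=|E|\ge1$, adjacency matrix $A$, degrees $d_i$. For a partition $\mathcal{C}$ of $V$ into nonempty communities, its modularity is $Q(\mathcal{C})=\frac{1}{2m}\sum_{i,j}\left(A_{i,j}-\frac{d_id_j}{2m}\right)\delta_{i,j}$, the sum over all ordered pairs $(i,j)$ including $i=j$, where $\delta_{i,j}=1$ if $i,j$ lie in the same community and $0$ otherwise. $Q_k$ denotes the maximum modularity over partitions of $V$ into exactly $k$ nonempty communities, $Q_k^+=\max_{1\le i\le k}Q_i$, and $Q_{\mathrm{opt}}=Q_n^+$ is the maximum modularity over all partitions. *)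

From HB Require Import structures.
From mathcomp Require Import all_boot all_order all_algebra.
Set Implicit Arguments. Unset Strict Implicit. Unset Printing Implicit Defensive.
Import Order.TTheory GRing.Theory Num.Theory.
Local Open Scope ring_scope.

Section Modularity.
Variables (n : nat) (e : rel 'I_n).

Definition simple_graph : Prop := symmetric e /\ irreflexive e.

Definition adj (i j : 'I_n) : rat := (e i j)%:R.
Definition deg (i : 'I_n) : nat := #|[set j | e i j]|.
Definition nedges : nat :=
  #|[set p : 'I_n * 'I_n | e p.1 p.2 && (p.1 < p.2)%N]|.

Definition modularity (P : {set {set 'I_n}}) : rat :=
  let m2 : rat := 2 * (nedges)%:R in
  m2^-1 * \sum_(i : 'I_n) \sum_(j : 'I_n)
    (adj i j - (deg i)%:R * (deg j)%:R / m2) * (pblock P i == pblock P j)%:R.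

Definition trivial_partition : {set {set 'I_n}} := [set [set: 'I_n]].

(* The default value of the big max is the modularity of the one-block
   partition, which is itself among the indexed partitions whenever
   1 <= k and n >= 1, so the big max is exactly the maximum. *)
Definition Qplus (k : nat) : rat :=
  \big[Num.max/modularity trivial_partition]_(P : {set {set 'I_n}} |
      partition P [set: 'I_n] && (1 <= #|P| <= k)%N) modularity P.

Definition Qopt : rat := Qplus n.

End Modularity.

From HB Require Import structures.
From mathcomp Require Import all_boot all_order all_algebra.
From mathcomp Require Import ring.
Import Order.TTheory GRing.Theory Num.Theory.
Local Open Scope ring_scope.

(* Write modularity through the modularity matrix B_ij = A_ij - d_i d_j / 2m
   as Q(h) = (1/2m) sum_ij B_ij [h i = h j] for a labelling h of the vertices
   (the label of a vertex being its community).  Every row of B sums to zero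
   (handshake lemma).  Given any partition P, colour its communities with k
   colours independently and uniformly, and merge communities of equal colour.
   Two distinct communities receive the same colour for exactly a 1/k
   fraction of the colourings, so averaged over all colourings
   [g (h i) = g (h j)] becomes (1 - 1/k) [h i = h j] + 1/k; as the rows of B
   sum to zero, the mean modularity of the merged partitions is
   (1 - 1/k) Q(P).  Some colouring is at least the mean, and it yields a
   partition with at most k communities.  So (1 - 1/k) Q(P) <= Q_k^+ for
   every P, and taking P optimal gives the theorem. *)

(* A scaled big max is bounded as soon as each scaled term and the scaled
   default are: the max is always one of them, whatever the sign of c. *)
Lemma mulr_bigmax_le {R : realDomainType} {I : finType} (P : pred I)
    (F : I -> R) (x0 c y : R) :
  c * x0 <= y -> (forall i, P i -> c * F i <= y) ->
  c * \big[Num.max/x0]_(i | P i) F i <= y.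
Proof.
move=> le_x0 le_F; elim/big_ind: _ => // a b le_a le_b.
by rewrite maxEle; case: ifP.
Qed.

Lemma exists_ge_mean {R : realDomainType} {I : finType} (F : I -> R) (a : R) :
  (0 < #|I|)%N -> #|I|%:R * a <= \sum_i F i -> exists i, a <= F i.
Proof.
case/card_gt0P=> i0 _ le_sum.
case: (boolP [exists i, a <= F i]) => [/existsP//|/existsPn lt_F].
have : \sum_i F i < \sum_(i : I) a.
  apply: ltr_sum => [|i _]; last by rewrite ltNge lt_F.
  by apply/hasP; exists i0; rewrite ?mem_index_enum.
by rewrite sumr_const -mulr_natl ltNge le_sum.
Qed.

Definition shift_at {T : finType} {k : nat} (y : T) (t : 'I_k.+1)
    (g : {ffun T -> 'I_k.+1}) : {ffun T -> 'I_k.+1} :=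
  [ffun z => if z == y then g z + t else g z].

Lemma shift_at_inj {T : finType} {k : nat} (y : T) (t : 'I_k.+1) :
  injective (shift_at y t).
Proof.
move=> g1 g2 /ffunP eq_shift; apply/ffunP => z; have := eq_shift z.
by rewrite !ffunE; case: ifP => // _ /addIr.
Qed.

(* Two distinct points receive the same colour in exactly a 1/k fraction of
   the k-colourings: shifting the colour of y by t identifies the colourings
   with g x = g y with those with g x = g y + t, and every colouring falls in
   exactly one of these k classes. *)
Lemma sum_colourings_agree_neq {R : numFieldType} {T : finType} {k : nat}
    (x y : T) : x != y ->
  \sum_(g : {ffun T -> 'I_k.+1}) ((g x == g y)%:R : R)
    = #|{ffun T -> 'I_k.+1}|%:R / k.+1%:R.
Proof.
move=> neq_xy; set S := \sum_g _.
have shifted t : S = \sum_(g : {ffun T -> 'I_k.+1}) ((g x == g y + t)%:R : R).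
  rewrite /S (reindex_inj (shift_at_inj y t)); apply: eq_bigr => g _.
  by rewrite !ffunE eqxx (negbTE neq_xy).
have one_shift (g : {ffun T -> 'I_k.+1}) :
    \sum_(t : 'I_k.+1) ((g x == g y + t)%:R : R) = 1.
  have agree t : (g x == g y + t) = (t == g x - g y).
    by rewrite [t == _]eq_sym subr_eq addrC.
  under eq_bigr do rewrite agree.
  by rewrite (bigD1 (g x - g y)) //= eqxx big1 ?addr0 // => t /negbTE ->.
have : k.+1%:R * S = #|{ffun T -> 'I_k.+1}|%:R.
  rewrite -[k.+1 in LHS]card_ord mulr_natl -sumr_const.
  under eq_bigr => t _ do rewrite (shifted t).
  by rewrite exchange_big /= (eq_bigr _ (fun g _ => one_shift g)) sumr_const.
by move=> <-; rewrite [_ * S]mulrC mulfK // pnatr_eq0.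
Qed.

Lemma sum_colourings_agree {R : numFieldType} {T : finType} {k : nat}
    (x y : T) :
  \sum_(g : {ffun T -> 'I_k.+1}) ((g x == g y)%:R : R)
    = #|{ffun T -> 'I_k.+1}|%:R
      * ((1 - k.+1%:R^-1) * (x == y)%:R + k.+1%:R^-1).
Proof.
have [<- | neq_xy] := eqVneq x y; last first.
  by rewrite (sum_colourings_agree_neq _ _ neq_xy) mulr0 add0r.
rewrite mulr1 subrK mulr1 -sum1_card natr_sum.
by apply: eq_bigr => g _; rewrite eqxx.
Qed.

Lemma pblock_preim_partition {X : finType} {T : eqType} (h : X -> T) (x y : X) :
  (pblock (preim_partition h [set: X]) x
     == pblock (preim_partition h [set: X]) y) = (h x == h y).
Proof.
have /and3P [/eqP cover_h triv_h _] := preim_partitionP h [set: X].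
rewrite eq_pblock // ?cover_h ?inE //.
rewrite (pblock_equivalence_partition (R := fun x y => h x == h y)) ?inE //.
by split=> // /eqP ->.
Qed.

Lemma card_preim_partition_le {X T : finType} (h : X -> T) :
  (#|preim_partition h [set: X]| <= #|T|)%N.
Proof.
have -> : preim_partition h [set: X]
    = [set (fun a => [set y in [set: X] | a == h y]) t
        | t in [set h x | x in [set: X]]].
  by rewrite -imset_comp.
exact: leq_trans (leq_imset_card _ _) (max_card _).
Qed.

Lemma card_preim_partition_gt0 {X : finType} {T : eqType} (h : X -> T) (x : X) :
  (0 < #|preim_partition h [set: X]|)%N.
Proof.
rewrite card_gt0; apply/set0Pn; exists (pblock (preim_partition h [set: X]) x).
have /and3P [/eqP cover_h _ _] := preim_partitionP h [set: X].
by rewrite pblock_mem // cover_h inE.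
Qed.

Section GraphModularity.
Variables (n : nat) (e : rel 'I_n).
Hypotheses (simple_e : simple_graph e) (edges_gt0 : (1 <= nedges e)%N).

Local Notation m2 := (2 * (nedges e)%:R : rat).

Definition mod_matrix (i j : 'I_n) : rat :=
  adj e i j - (deg e i)%:R * (deg e j)%:R / m2.

Definition label_modularity {T : eqType} (h : 'I_n -> T) : rat :=
  m2^-1 * \sum_i \sum_j mod_matrix i j * (h i == h j)%:R.

Lemma modularity_pblock (P : {set {set 'I_n}}) :
  modularity e P = label_modularity (pblock P).
Proof. by []. Qed.

Lemma modularity_preim_partition {T : eqType} (h : 'I_n -> T) :
  modularity e (preim_partition h [set: 'I_n]) = label_modularity h.
Proof.
rewrite modularity_pblock /label_modularity.
by under eq_bigr do under eq_bigr do rewrite pblock_preim_partition.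
Qed.

Lemma deg_sum_adj (i : 'I_n) : (deg e i)%:R = \sum_j adj e i j.
Proof.
rewrite /deg -sum1_card big_mkcond natr_sum; apply: eq_bigr => j _.
by rewrite inE /adj; case: (e i j).
Qed.

(* Handshake lemma: each edge is counted once from each endpoint. *)
Lemma handshake : \sum_i ((deg e i)%:R : rat) = m2.
Proof.
case: simple_e => sym_e irr_e.
have split_edge i j :
    adj e i j = (e i j && (i < j)%N)%:R + (e j i && (j < i)%N)%:R.
  rewrite /adj sym_e; case: (boolP (e j i)) => //= e_ji.
  have : i != j by apply: contraTneq e_ji => ->; rewrite irr_e.
  by rewrite neq_ltn; case: ltngtP.
under eq_bigr do rewrite deg_sum_adj.
under eq_bigr do under eq_bigr do rewrite split_edge.
under eq_bigr do rewrite big_split /=.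
rewrite big_split /= [X in _ + X]exchange_big /= -mulr2n mulr_natl.
congr (_ *+ 2).
rewrite pair_big /nedges -sum1_card natr_sum [RHS]big_mkcond /=.
apply: eq_bigr => p _.
by rewrite inE; case: (_ && _).
Qed.

Lemma mod_matrix_row_sum (i : 'I_n) : \sum_j mod_matrix i j = 0.
Proof.
have m2_neq0 : m2 != 0 by rewrite -natrM pnatr_eq0 muln_eq0 negb_or /= -lt0n.
rewrite sumrB -deg_sum_adj -mulr_suml -mulr_sumr handshake mulfK //.
by rewrite subrr.
Qed.

(* Averaged over all k-colourings g of the labels, recolouring by g scales
   the modularity by 1 - 1/k: the constant part 1/k of sum_colourings_agree
   is killed by the zero row sums of B. *)
Lemma mean_recoloured_modularity {T : finType} (h : 'I_n -> T) (k : nat) :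
  \sum_(g : {ffun T -> 'I_k.+1}) label_modularity (fun i => g (h i))
    = #|{ffun T -> 'I_k.+1}|%:R * ((1 - k.+1%:R^-1) * label_modularity h).
Proof.
set N := #|{ffun T -> 'I_k.+1}|; set c := 1 - k.+1%:R^-1.
rewrite /label_modularity -mulr_sumr exchange_big.
under eq_bigr do rewrite exchange_big.
under eq_bigr do under eq_bigr do rewrite -mulr_sumr sum_colourings_agree.
have split_term i j :
    mod_matrix i j * (N%:R * (c * (h i == h j)%:R + k.+1%:R^-1))
    = N%:R * c * (mod_matrix i j * (h i == h j)%:R)
      + N%:R / k.+1%:R * mod_matrix i j.
  by ring.
under eq_bigr do under eq_bigr do rewrite split_term.
under eq_bigr do
  rewrite big_split /= -!mulr_sumr mod_matrix_row_sum mulr0 addr0.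
by rewrite -mulr_sumr; ring.
Qed.

Lemma exists_good_recolouring {T : finType} (h : 'I_n -> T) (k : nat) :
  exists g : {ffun T -> 'I_k.+1},
    (1 - k.+1%:R^-1) * label_modularity h
      <= label_modularity (fun i => g (h i)).
Proof.
apply: exists_ge_mean; first by rewrite card_ffun card_ord expn_gt0.
by rewrite mean_recoloured_modularity.
Qed.

Lemma vertices_gt0 : (0 < n)%N.
Proof.
by case/card_gt0P: edges_gt0 => p _; apply: leq_ltn_trans (ltn_ord p.1).
Qed.

(* The key bound: (1 - 1/k) Q(P) <= Q_k^+ for every family of vertex sets
   P, the good recolouring of P being a partition into 1..k communities. *)
Lemma scaled_modularity_le_Qplus (P : {set {set 'I_n}}) (k : nat) :
  (1 - k.+1%:R^-1) * modularity e P <= Qplus e k.+1.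
Proof.
have [g le_g] := exists_good_recolouring (pblock P) k.
rewrite modularity_pblock (le_trans le_g) // -modularity_preim_partition.
apply: le_bigmax_cond; rewrite preim_partitionP.
rewrite (card_preim_partition_gt0 _ (Ordinal vertices_gt0)) /=.
by have := card_preim_partition_le (fun i => g (pblock P i)); rewrite card_ord.
Qed.

End GraphModularity.

Theorem lemma1 (n : nat) (e : rel 'I_n) (k : nat) :
  simple_graph e -> (1 <= nedges e)%N -> (1 <= k <= n)%N ->
  (1 - k%:R^-1) * Qopt e <= Qplus e k.
Proof.
move=> simple_e edges_gt0; case: k => [//|k] _.
by apply: mulr_bigmax_le => [|P _]; apply: scaled_modularity_le_Qplus.
Qed.
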